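(* Let $S$ be an irreducible numerical semigroup with Frobenius number $F$, and let $x$ be a minimal generator of $S$ such that: (1) $x<F$; (2) $2x-F\notin S$; (3) $3x\neq 2F$; (4) $4x\neq 3F$. Then $\overline{S}=(S\setminus\{x\})\cup\{F-x\}$ is an irreducible numerical semigroup with Frobenius number $F$.
   Context: A numerical semigroup is a subset $S\subseteq\mathbb{N}$ (with $\mathbb{N}$ the set of nonnegative integers) closed under addition, containing $0$, with $\mathbb{N}\setminus S$ finite. Its Frobenius number $\mathrm{F}(S)$ is the largest integer not in $S$. Every numerical semigroup has a unique minimal system of generators (a finite set $A$ with $S$ equal to the submonoid of $(\mathbb{N},+)$ generated by $A$, minimal with respect to inclusion); its elements are the minimal generators of $S$. A numerical semigroup is irreducible if it cannot be expressed as the intersection of two numerical semigroups properly containing it. *)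

From Stdlib Require Import Arith List.

Definition is_numerical_semigroup (S : nat -> Prop) : Prop :=
  S 0 /\ (forall a b, S a -> S b -> S (a + b)) /\
  (exists N, forall n, N <= n -> S n).

Definition frobenius (S : nat -> Prop) (F : nat) : Prop :=
  ~ S F /\ forall n, F < n -> S n.

Inductive generated (A : nat -> Prop) : nat -> Prop :=
  | gen_zero : generated A 0
  | gen_add : forall a n, A a -> generated A n -> generated A (a + n).

Definition generating_system (S : nat -> Prop) (A : nat -> Prop) : Prop :=
  (exists l : list nat, forall a, A a <-> In a l) /\
  (forall n, S n <-> generated A n).

Definition minimal_generating_system (S A : nat -> Prop) : Prop :=
  generating_system S A /\
  forall B : nat -> Prop, (forall a, B a -> A a) -> generating_system S B ->
    forall a, A a -> B a.

(* x is a minimal generator of S: x belongs to the (unique) minimal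
   system of generators of S. *)
Definition minimal_generator (S : nat -> Prop) (x : nat) : Prop :=
  exists A, minimal_generating_system S A /\ A x.

Definition irreducible (S : nat -> Prop) : Prop :=
  is_numerical_semigroup S /\
  ~ (exists S1 S2 : nat -> Prop,
        is_numerical_semigroup S1 /\ is_numerical_semigroup S2 /\
        (forall n, S n -> S1 n) /\ (exists n, S1 n /\ ~ S n) /\
        (forall n, S n -> S2 n) /\ (exists n, S2 n /\ ~ S n) /\
        (forall n, S n <-> (S1 n /\ S2 n))).

(* An irreducible numerical semigroup with Frobenius number F is one in which
   every gap h < F has F - h in S or satisfies 2h = F; conversely this
   dichotomy forces irreducibility, since any proper oversemigroup then
   contains F.  The gaps of S̄ satisfy it because those of S do, with x and
   F - x exchanging roles.  Closure of S̄ under addition uses the dichotomy in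
   S once more: a sum a + (F - x) or 2(F - x) outside S̄ would split x into
   two nonzero elements of S, put 2x - F in S, or force 3x = 2F or 4x = 3F. *)
From Stdlib Require Import Arith List Lia Classical.

Lemma generated_mono (A B : nat -> Prop) :
  (forall a, A a -> B a) -> forall n, generated A n -> generated B n.
Proof. intros AB n G; induction G; constructor; auto. Qed.

Lemma generated_add (A : nat -> Prop) m n :
  generated A m -> generated A n -> generated A (m + n).
Proof.
  intros Gm Gn; induction Gm as [|a m Aa Gm IH]; simpl; auto.
  rewrite <- Nat.add_assoc; constructor; auto.
Qed.

Definition without (A : nat -> Prop) (x : nat) : nat -> Prop :=
  fun a => A a /\ a <> x.

Lemma generated_without_lt (A : nat -> Prop) x n :
  generated A n -> n < x -> generated (without A x) n.
Proof.
  intros G; induction G as [|a n Aa G IH]; intros Hlt; constructor.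
  - split; [assumption | lia].
  - apply IH; lia.
Qed.

Lemma generated_without (A : nat -> Prop) x :
  generated (without A x) x ->
  forall n, generated A n -> generated (without A x) n.
Proof.
  intros Gx n G; induction G as [|a n Aa G IH]; [constructor |].
  destruct (Nat.eq_dec a x) as [-> | ax].
  - apply generated_add; assumption.
  - constructor; [split |]; assumption.
Qed.

Lemma generating_system_without (S A : nat -> Prop) x :
  generating_system S A -> generated (without A x) x ->
  generating_system S (without A x).
Proof.
  intros [[l Hl] HS] Gx; split.
  - exists (filter (fun a => negb (a =? x)) l); intro a.
    rewrite filter_In, Bool.negb_true_iff, Nat.eqb_neq, <- Hl; reflexivity.
  - intro n; rewrite HS; split.
    + apply generated_without; assumption.
    + apply generated_mono; intros a [Aa _]; assumption.
Qed.

Lemma minimal_generator_atom (S : nat -> Prop) x :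
  minimal_generator S x ->
  S x /\ x <> 0 /\ forall a b, S a -> S b -> a + b = x -> a = 0 \/ b = 0.
Proof.
  intros [A [[[Hfin HS] Hmin] Ax]].
  assert (essential : ~ generated (without A x) x).
  { intros Gx; apply (Hmin (without A x) (fun a H => proj1 H)
                       (generating_system_without S A x (conj Hfin HS) Gx) x Ax).
    reflexivity. }
  assert (Sx : S x).
  { apply HS; rewrite <- (Nat.add_0_r x); constructor; [assumption | constructor]. }
  split; [assumption | split].
  - intros ->; apply essential; constructor.
  - intros a b Sa Sb Hab.
    destruct (Nat.eq_dec a 0) as [| a0]; [left; assumption |].
    destruct (Nat.eq_dec b 0) as [| b0]; [right; assumption |].
    exfalso; apply essential; rewrite <- Hab.
    apply generated_add; apply generated_without_lt; try apply HS; auto; lia.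
Qed.

Lemma adjoin_semigroup (S : nat -> Prop) h :
  is_numerical_semigroup S ->
  (forall s, S s -> s <> 0 -> S (h + s)) -> S (h + h) ->
  is_numerical_semigroup (fun n => S n \/ n = h).
Proof.
  intros [S0 [Sadd [N HN]]] Shs Shh; split; [left; assumption | split].
  - intros a b [Sa | ->] [Sb | ->].
    + left; auto.
    + destruct (Nat.eq_dec a 0) as [-> | a0]; [right; reflexivity |].
      left; rewrite Nat.add_comm; auto.
    + destruct (Nat.eq_dec b 0) as [-> | b0]; [right; lia | left; auto].
    + left; assumption.
  - exists N; intros; left; auto.
Qed.

Section Irreducible.

Variables (S : nat -> Prop) (F : nat).
Hypothesis S_semigroup : is_numerical_semigroup S.
Hypothesis S_frobenius : frobenius S F.

Definition gap_symmetric : Prop :=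
  forall h, ~ S h -> h < F -> S (F - h) \/ 2 * h = F.

Lemma frobenius_pos : 0 < F.
Proof.
  destruct S_semigroup as [S0 _], S_frobenius as [SF _].
  destruct F; [contradiction | lia].
Qed.

Lemma irreducible_maximal :
  irreducible S ->
  forall T, is_numerical_semigroup T -> (forall n, S n -> T n) -> ~ T F ->
  forall n, T n -> S n.
Proof.
  intros [_ Hno] T T_semigroup ST TF n Tn.
  destruct S_frobenius as [SF Sgt].
  apply NNPP; intros Sn; apply Hno.
  exists T, (fun m => S m \/ m = F).
  assert (F0 := frobenius_pos).
  split; [assumption | split; [| split; [assumption | split; [eauto | split]]]].
  - apply adjoin_semigroup; [assumption | |]; intros; apply Sgt; lia.
  - intros m Sm; left; assumption.
  - split; [exists F; split; [right; reflexivity | assumption] |].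
    intros m; split; [intros Sm; split; [auto | left; assumption] |].
    intros [Tm [Sm | ->]]; [assumption | contradiction].
Qed.

Lemma irreducible_gap_symmetric : irreducible S -> gap_symmetric.
Proof.
  intros S_irr.
  destruct S_semigroup as [S0 [Sadd _]], S_frobenius as [SF Sgt].
  enough (H : forall k h, F - h = k -> ~ S h -> h < F -> S (F - h) \/ 2 * h = F)
    by (intros h; apply (H (F - h)); reflexivity).
  induction k as [k IH] using lt_wf_ind; intros h <- Sh hF.
  destruct (classic (S (F - h))) as [| SFh]; [left; assumption |].
  destruct (Nat.eq_dec (2 * h) F) as [| h_half]; [right; assumption |].
  exfalso.
  assert (h0 : h <> 0) by (intros ->; contradiction).
  (* Below F/2 the gap F - h is a larger counterexample; above F/2, S ∪ {h}
     is a semigroup avoiding F, against maximality. *)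
  assert (h_big : F < 2 * h).
  { apply Nat.nle_gt; intros Hle.
    destruct (IH h ltac:(lia) (F - h) ltac:(lia) SFh ltac:(lia)) as [Sh' | ];
      [replace (F - (F - h)) with h in Sh' by lia; contradiction | lia]. }
  assert (h_shift : forall s, S s -> s <> 0 -> S (h + s)).
  { intros s Ss s0; apply NNPP; intros Shs.
    assert (h + s < F).
    { destruct (lt_eq_lt_dec (h + s) F) as [[| Heq] | Hgt]; [assumption | |].
      - exfalso; apply SFh; replace (F - h) with s by lia; assumption.
      - contradiction (Sgt _ Hgt). }
    destruct (IH (F - (h + s)) ltac:(lia) (h + s) eq_refl Shs ltac:(lia))
      as [SF' | ]; [| lia].
    apply SFh; replace (F - h) with (F - (h + s) + s) by lia; auto. }
  apply Sh, (irreducible_maximal S_irr (fun n => S n \/ n = h)).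
  - apply adjoin_semigroup; [assumption | assumption | apply Sgt; lia].
  - left; assumption.
  - intros [| ]; [contradiction | lia].
  - right; reflexivity.
Qed.

Lemma gap_symmetric_irreducible : gap_symmetric -> irreducible S.
Proof.
  intros Hsym; split; [assumption |].
  destruct S_frobenius as [SF Sgt].
  assert (contains_F : forall T, is_numerical_semigroup T ->
            (forall n, S n -> T n) -> (exists n, T n /\ ~ S n) -> T F).
  { intros T [_ [Tadd _]] ST [n [Tn Sn]].
    destruct (lt_eq_lt_dec n F) as [[nF | ->] | Fn];
      [| assumption | contradiction (Sgt _ Fn)].
    destruct (Hsym n Sn nF) as [SFn | Hhalf].
    - replace F with (F - n + n) by lia; auto.
    - replace F with (n + n) by lia; auto. }
  intros [S1 [S2 [S1_sg [S2_sg [S1S [S1new [S2S [S2new Hcap]]]]]]]].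
  apply SF, Hcap; split; apply contains_F; assumption.
Qed.

End Irreducible.

Definition swap (S : nat -> Prop) (F x : nat) : nat -> Prop :=
  fun n => (S n /\ n <> x) \/ n = F - x.

Section Swap.

Variables (S : nat -> Prop) (F x : nat).
Hypothesis S_irreducible : irreducible S.
Hypothesis S_frobenius : frobenius S F.
Hypothesis x_atom : forall a b, S a -> S b -> a + b = x -> a = 0 \/ b = 0.
Hypothesis x_nonzero : x <> 0.
Hypothesis x_lt_F : x < F.
Hypothesis x_twice : forall s, S s -> s + F <> 2 * x.
Hypothesis x_three : 3 * x <> 2 * F.
Hypothesis x_four : 4 * x <> 3 * F.

Let S0 : S 0 := proj1 (proj1 S_irreducible).
Let S_add : forall a b, S a -> S b -> S (a + b) :=
  proj1 (proj2 (proj1 S_irreducible)).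

Lemma mem_or_dual_mem m : m < F -> S m \/ S (F - m) \/ 2 * m = F.
Proof.
  intros mF; destruct (classic (S m)) as [| Sm]; [left; assumption |].
  right; apply (irreducible_gap_symmetric S F); auto.
  apply S_irreducible.
Qed.

Lemma swap_add_dual a : S a -> a <> x -> swap S F x (a + (F - x)).
Proof.
  intros Sa ax; destruct (Nat.eq_dec a 0) as [-> | a0]; [right; reflexivity |].
  left; split.
  - destruct (lt_eq_lt_dec (a + (F - x)) F) as [[Hlt | ] | Hgt];
      [| lia | apply S_frobenius; assumption].
    destruct (mem_or_dual_mem _ Hlt) as [| [Sdual | Hhalf]]; [assumption | |].
    + destruct (x_atom a (x - a)) as [| ]; try lia; [assumption |].
      replace (x - a) with (F - (a + (F - x))) by lia; assumption.
    + contradiction (x_twice (a + a)); [apply S_add | lia]; assumption.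
  - intros Heq; apply (x_twice a Sa); lia.
Qed.

Lemma swap_dual_twice : swap S F x ((F - x) + (F - x)).
Proof.
  left; split; [| lia].
  destruct (lt_eq_lt_dec ((F - x) + (F - x)) F) as [[Hlt | ] | Hgt];
    [| contradiction (x_twice 0 S0); lia | apply S_frobenius; assumption].
  destruct (mem_or_dual_mem _ Hlt) as [| [Sdual | ]]; [assumption | | lia].
  contradiction (x_twice _ Sdual); lia.
Qed.

Lemma swap_semigroup : is_numerical_semigroup (swap S F x).
Proof.
  split; [left; split; [exact S0 | lia] | split].
  - intros a b [[Sa ax] | ->] [[Sb bx] | ->].
    + left; split; [apply S_add; assumption |].
      intros Hab; destruct (x_atom a b Sa Sb Hab); lia.
    + apply swap_add_dual; assumption.
    + rewrite Nat.add_comm; apply swap_add_dual; assumption.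
    + apply swap_dual_twice.
  - exists (Datatypes.S F); intros n Hn; left; split; [apply S_frobenius | ]; lia.
Qed.

Lemma swap_frobenius : frobenius (swap S F x) F.
Proof.
  split.
  - intros [[SF _] | ]; [apply S_frobenius; assumption | lia].
  - intros n Hn; left; split; [apply S_frobenius |]; lia.
Qed.

Lemma swap_gap_symmetric : gap_symmetric (swap S F x) F.
Proof.
  intros h Sh hF.
  destruct (Nat.eq_dec h x) as [-> | hx]; [left; right; reflexivity |].
  assert (Sh' : ~ S h) by (intros Sh'; apply Sh; left; split; assumption).
  assert (h_dual : h <> F - x) by (intros ->; apply Sh; right; reflexivity).
  destruct (irreducible_gap_symmetric S F (proj1 S_irreducible) S_frobenius
              S_irreducible h Sh' hF) as [SFh | ];
    [left; left; split; [assumption | lia] | right; assumption].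
Qed.

End Swap.

Theorem proposition5 (S : nat -> Prop) (F x : nat) :
  irreducible S -> frobenius S F -> minimal_generator S x ->
  x < F -> ~ (F <= 2 * x /\ S (2 * x - F)) ->
  3 * x <> 2 * F -> 4 * x <> 3 * F ->
  let Sbar := fun n => (S n /\ n <> x) \/ n = F - x in
  irreducible Sbar /\ frobenius Sbar F.
Proof.
  intros S_irr S_frob x_min x_lt_F x_twice x_three x_four Sbar.
  destruct (minimal_generator_atom S x x_min) as [_ [x_nonzero x_atom]].
  assert (x_twice' : forall s, S s -> s + F <> 2 * x).
  { intros s Ss Heq; apply x_twice; split; [lia |].
    replace (2 * x - F) with s by lia; assumption. }
  split.
  - apply gap_symmetric_irreducible with F.
    + apply swap_semigroup; assumption.
    + apply swap_frobenius; assumption.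
    + apply swap_gap_symmetric; assumption.
  - apply swap_frobenius; assumption.
Qed.
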